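(* Let $\mathbf p=(p_1,\dots,p_n)$ be positive integers with $p_1\ge\cdots\ge p_n$, and let $0\le c'<c\le 1$. Then for every house size $h>0$ we have $S_c(h,\mathbf p)\le S_{c'}(h,\mathbf p)$ in lexicographic order. Likewise $S_c(\mathbf p)\le S_{c'}(\mathbf p)$ in lexicographic order.
   Context: Stationary divisor method with cut point $c\in[0,1]$: seats are allocated one at a time. Initially each party $i$ has $a_i=0$ seats; each next seat goes to a party $i$ maximizing $p_i/(a_i+c)$, whose $a_i$ then increases by $1$. Ties are broken in favor of the smallest index. For $c=0$ the convention is that $p_i/0>p_j/0$ whenever $p_i>p_j$, and $p_i/0>p_j/k$ for every $k>0$. $S_c(h,\mathbf p)=(s_1,\dots,s_h)$, where $s_j$ is the index of the party receiving the $j$-th seat, and $S_c(\mathbf p)$ is the corresponding infinite sequence. Lexicographic order on sequences: $s<t$ if for some $k\ge0$ we have $s_i=t_i$ for $i\le k$ and $s_{k+1}<t_{k+1}$. *)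

(* parties are indexed 0..n-1 (0-based version of 1..n). *)
From mathcomp Require Import all_boot all_order all_algebra.
From mathcomp Require Import reals.
Set Implicit Arguments. Unset Strict Implicit. Unset Printing Implicit Defensive.
Import Order.TTheory GRing.Theory Num.Theory.
Local Open Scope ring_scope.

Section Stationary.
Variable R : realType.

(* [beats c pi ai pj aj]: party with votes pi and ai seats has strictly larger
   priority pi/(ai+c) than party with pj votes and aj seats, using the
   convention for division by 0: pi/0 > pj/0 iff pi > pj, and pi/0 > pj/k, k>0. *)
Definition beats (c : R) (pi ai pj aj : nat) : bool :=
  let di := ai%:R + c in
  let dj := aj%:R + c in
  if di == 0 then (dj != 0) || (pj < pi)%N
  else (dj != 0) && (pj%:R / dj < pi%:R / di).

Definition next_seat (c : R) (p : seq nat) (a : nat -> nat) : nat :=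
  let n := size p in
  find (fun i => all (fun j => ~~ beats c (nth 0%N p j) (a j) (nth 0%N p i) (a i))
                     (iota 0 n))
       (iota 0 n).

Fixpoint seats_state (c : R) (p : seq nat) (k : nat) : nat -> nat :=
  match k with
  | 0 => fun _ => 0%N
  | k'.+1 => let a := seats_state c p k' in
             let i := next_seat c p a in
             fun j => if j == i then (a j).+1 else a j
  end.

Definition S_fin (c : R) (h : nat) (p : seq nat) : seq nat :=
  [seq next_seat c p (seats_state c p k) | k <- iota 0 h].

Definition S_inf (c : R) (p : seq nat) : nat -> nat :=
  fun k => next_seat c p (seats_state c p k).
End Stationary.

Definition lex_le_seq (s t : seq nat) : Prop :=
  s = t \/ exists k, [/\ (k < size s)%N, (k < size t)%N, take k s = take k t
                        & (nth 0 s k < nth 0 t k)%N].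

Definition lex_le_inf (s t : nat -> nat) : Prop :=
  (forall k, s k = t k) \/
  exists k, (forall i, (i < k)%N -> s i = t i) /\ (s k < t k)%N.

(* If party i has no more votes than
   party j and has the higher priority at cut c, it keeps the higher priority
   at every cut c' < c: cross-multiplying, lowering the cut by c - c' lowers
   the product on j's side by p_j (c - c') but on i's side only by
   p_i (c - c').  As the parties are listed by decreasing votes, the winner
   of the next seat at cut c therefore has index at most that of the winner
   at cut c'.  The two allocations run through the same states until their
   first disagreement, where the one for c thus names the smaller index. *)

From mathcomp Require Import all_boot all_order all_algebra.
From mathcomp Require Import reals.
From mathcomp Require Import lra.
From Stdlib Require Import Classical.
Set Implicit Arguments. Unset Strict Implicit. Unset Printing Implicit Defensive.
Import Order.TTheory GRing.Theory Num.Theory.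
Local Open Scope ring_scope.

Section Allocation.
Variable R : realType.
Implicit Types (c : R) (p : seq nat) (a : nat -> nat).

Lemma beatsE c pi ai pj aj : 0 < c ->
  beats c pi ai pj aj = (pj%:R / (aj%:R + c) < pi%:R / (ai%:R + c)).
Proof.
move=> c_gt0; have := ler0n R ai; have := ler0n R aj => aj_ge0 ai_ge0.
by rewrite /beats !gt_eqF //; lra.
Qed.

Lemma beats_lower_cut c c' pi ai pj aj : (pi <= pj)%N -> 0 <= c' -> c' < c ->
  beats c pi ai pj aj -> beats c' pi ai pj aj.
Proof.
rewrite -(ler_nat R) => le_pij c'_ge0 lt_c'c.
have := ler0n R ai; have := ler0n R aj; have := ler0n R pi => pi_ge0 aj_ge0 ai_ge0.
rewrite beatsE; last lra.
rewrite ltr_pdivrMr; last lra.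
rewrite mulrAC ltr_pdivlMr; last lra.
move=> cross; have {}cross : pj%:R * (ai%:R + c') < pi%:R * (aj%:R + c') :> R.
  have : 0 <= (pj%:R - pi%:R) * (c - c') :> R by apply: mulr_ge0; lra.
  by rewrite !mulrDr; lra.
rewrite /beats; case: eqVneq => [di0|di0]; case: eqVneq => [dj0|dj0] //=.
- by move: cross; rewrite di0 dj0 !mulr0 ltxx.
- by move: cross; rewrite dj0 mulr0 ltNge mulr_ge0 //; lra.
have di_gt0 : 0 < ai%:R + c' by rewrite lt_neqAle eq_sym di0; lra.
have dj_gt0 : 0 < aj%:R + c' by rewrite lt_neqAle eq_sym dj0; lra.
by rewrite ltr_pdivrMr // mulrAC ltr_pdivlMr.
Qed.

Definition unbeaten c p a (i : nat) : bool :=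
  all (fun j => ~~ beats c (nth 0%N p j) (a j) (nth 0%N p i) (a i)) (iota 0 (size p)).

Lemma next_seatE c p a : next_seat c p a = find (unbeaten c p a) (iota 0 (size p)).
Proof. by []. Qed.

Lemma next_seat_le_size c p a : (next_seat c p a <= size p)%N.
Proof. by rewrite next_seatE -[leqRHS](size_iota 0) find_size. Qed.

Lemma unbeaten_next_seat c p a :
  (next_seat c p a < size p)%N -> unbeaten c p a (next_seat c p a).
Proof.
rewrite next_seatE => lt_next_size.
have has_unbeaten : has (unbeaten c p a) (iota 0 (size p)).
  by rewrite has_find size_iota.
by have := nth_find 0%N has_unbeaten; rewrite nth_iota.
Qed.

Lemma beaten_before_next_seat c p a j : (j < next_seat c p a)%N ->
  exists2 k, (k < size p)%N & beats c (nth 0%N p k) (a k) (nth 0%N p j) (a j).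
Proof.
move=> lt_j_next; have lt_j_size := leq_trans lt_j_next (next_seat_le_size c p a).
move: (before_find 0%N lt_j_next); rewrite nth_iota // add0n.
by case/negbT/allPn => k; rewrite mem_iota add0n negbK; exists k.
Qed.

Lemma next_seat_lt_size c p a : 0 < c -> (0 < size p)%N -> (next_seat c p a < size p)%N.
Proof.
move=> c_gt0 p_gt0; pose f (i : 'I_(size p)) := (nth 0%N p i)%:R / ((a i)%:R + c).
case: (@arg_maxP _ _ _ (Ordinal p_gt0) xpredT f) => // m _ f_max.
rewrite next_seatE -[X in (_ < X)%N](size_iota 0) -has_find; apply/hasP.
exists (val m); first by rewrite mem_iota add0n ltn_ord.
apply/allP => j; rewrite mem_iota add0n => lt_j_size.
by rewrite beatsE // -leNgt; exact: (f_max (Ordinal lt_j_size)).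
Qed.

Lemma next_seat_lower_cut c c' p a : sorted geq p -> 0 <= c' -> c' < c ->
  (next_seat c p a <= next_seat c' p a)%N.
Proof.
move=> p_sorted c'_ge0 lt_c'c; have c_gt0 : 0 < c by lra.
set i := next_seat c p a; set j := next_seat c' p a.
rewrite leqNgt; apply/negP => lt_ji.
have lt_i_size : (i < size p)%N.
  apply: next_seat_lt_size => //.
  exact: leq_trans (leq_ltn_trans (leq0n j) lt_ji) (next_seat_le_size c p a).
have lt_j_size := ltn_trans lt_ji lt_i_size.
have [k lt_k_size k_beats_j] := beaten_before_next_seat lt_ji.
have i_unbeaten := allP (unbeaten_next_seat lt_i_size).
have i_beats_j : beats c (nth 0%N p i) (a i) (nth 0%N p j) (a j).
  move: k_beats_j (i_unbeaten k); rewrite mem_iota add0n lt_k_size !beatsE // -leNgt.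
  by move=> ltjk /(_ isT); apply: lt_le_trans.
have le_pij : (nth 0%N p i <= nth 0%N p j)%N.
  by apply: (sorted_leq_nth (rev_trans leq_trans) leqnn) => //; apply: ltnW.
have := allP (unbeaten_next_seat lt_j_size) i; rewrite mem_iota add0n lt_i_size.
by move=> /(_ isT); rewrite (beats_lower_cut le_pij c'_ge0 lt_c'c i_beats_j).
Qed.

Lemma seats_state_eq_prefix c c' p k :
  (forall i, (i < k)%N -> S_inf c p i = S_inf c' p i) ->
  seats_state c p k = seats_state c' p k.
Proof.
elim: k => [//|k IHk] S_eq /=.
have S_eq_k : seats_state c p k = seats_state c' p k.
  by apply: IHk => i /ltnW; apply: S_eq.
by move: (S_eq k (ltnSn k)); rewrite /S_inf S_eq_k => ->.
Qed.
End Allocation.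

Section LexFirstDifference.
Variables s t : nat -> nat.
Hypothesis le_at_first_diff :
  forall k, (forall i, (i < k)%N -> s i = t i) -> (s k <= t k)%N.

Lemma lt_at_first_diff k : s k != t k ->
  exists m, [/\ (m <= k)%N, forall i, (i < m)%N -> s i = t i & (s m < t m)%N].
Proof.
move=> neq_k; have ex_neq : exists m, s m != t m by exists k.
case: (ex_minnP ex_neq) => m neq_m min_m.
have eq_before i : (i < m)%N -> s i = t i.
  by apply: contraTeq => /min_m; rewrite -leqNgt.
exists m; split=> //; first exact: min_m.
by rewrite ltn_neqAle neq_m le_at_first_diff.
Qed.

Lemma lex_le_inf_first_diff : lex_le_inf s t.
Proof.
case: (classic (exists k, s k <> t k)) => [[k /eqP /lt_at_first_diff]|all_eq].
  by case=> m [_ eq_before lt_m]; right; exists m.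
by left=> k; apply: NNPP => neq_k; apply: all_eq; exists k.
Qed.

Lemma lex_le_seq_first_diff h : lex_le_seq (map s (iota 0 h)) (map t (iota 0 h)).
Proof.
case: (boolP (has (fun i => s i != t i) (iota 0 h))) => [|/hasPn all_eq].
  case/hasP=> k; rewrite mem_iota add0n => lt_kh.
  case/lt_at_first_diff=> m [le_mk eq_before lt_m].
  have lt_mh := leq_ltn_trans le_mk lt_kh.
  right; exists m; rewrite !size_map size_iota; split=> //.
    rewrite -!map_take take_iota; apply/eq_in_map => i.
    by rewrite mem_iota add0n (minn_idPl (ltnW lt_mh)); apply: eq_before.
  by rewrite !(nth_map 0%N) ?size_iota // nth_iota.
by left; apply/eq_in_map => i /all_eq /negPn /eqP.
Qed.
End LexFirstDifference.

Theorem mainTheorem2 (R : realType) (p : seq nat) (c c' : R) :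
  all (fun x => (0 < x)%N) p -> sorted geq p ->
  0 <= c' -> c' < c -> c <= 1 ->
  (forall h : nat, (0 < h)%N -> lex_le_seq (S_fin c h p) (S_fin c' h p)) /\
  lex_le_inf (S_inf c p) (S_inf c' p).
Proof.
move=> _ p_sorted c'_ge0 lt_c'c _.
have le_at_first_diff k : (forall i, (i < k)%N -> S_inf c p i = S_inf c' p i) ->
    (S_inf c p k <= S_inf c' p k)%N.
  move/seats_state_eq_prefix; rewrite /S_inf => ->.
  exact: next_seat_lower_cut.
split; last exact: lex_le_inf_first_diff.
by move=> h _; apply: lex_le_seq_first_diff.
Qed.
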